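(* Let $\varphi_{tm}$ be the morphism on finite sequences of numbers in $[0,1]$ defined by $\varphi_{tm}(x)=\left(\tfrac{x}{2}+\tfrac14,\ \tfrac{x}{2}+\tfrac34\right)$ if $0\le x\le \tfrac12$ and $\varphi_{tm}(x)=\left(\tfrac{x}{2}+\tfrac14,\ \tfrac{x}{2}-\tfrac14\right)$ if $\tfrac12<x\le 1$, extended by concatenation. Let $a_{tm}=\tfrac12,1,\tfrac34,\tfrac14,\tfrac58,\tfrac18,\tfrac38,\tfrac78,\ldots$ be its fixed point starting with $\tfrac12$. Then $a_{tm}$ is a canonical sequence and it is a representative of the valid permutation $\alpha_{u_{tm}}$ of the Thue–Morse word $u_{tm}=0110100110010110\cdots$ (the fixed point starting with $0$ of $0\mapsto 01,\ 1\mapsto 10$). In particular, the Thue–Morse permutation is ergodic and $a_{tm}$ is its canonical representative.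
   Context: For an aperiodic infinite word $u$ over $\{0,\ldots,q-1\}$, $\alpha_u$ is the infinite permutation with $\alpha_u[i]<\alpha_u[j]$ iff the shift $T^iu=u[i]u[i+1]\cdots$ is lexicographically smaller than $T^ju$. An infinite permutation is an equivalence class of real sequences with pairwise distinct elements, two sequences $(a[n]),(b[n])$ being equivalent iff $a[i]<a[j]\Leftrightarrow b[i]<b[j]$ for all $i,j$. A real sequence $(a[i])_{i\ge0}$ is canonical if its elements are pairwise distinct, lie in $[0,1]$, and for every $t\in[0,1]$, $\#\{0\le k<n: a[j+k]<t\}/n\to t$ as $n\to\infty$ uniformly in $j$; a permutation is ergodic if it has a canonical representative. *)

From Stdlib Require Import Reals Lra Lia List Arith.
Import ListNotations.
Open Scope R_scope.

Definition word := nat -> nat.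

Definition shift (i : nat) (u : word) : word := fun n => u (i + n)%nat.

Definition lex_lt (u v : word) : Prop :=
  exists k : nat, (forall m : nat, (m < k)%nat -> u m = v m) /\ (u k < v k)%nat.

Definition represents_alpha (a : nat -> R) (u : word) : Prop :=
  (forall i j : nat, i <> j -> a i <> a j) /\
  (forall i j : nat, a i < a j <-> lex_lt (shift i u) (shift j u)).

Fixpoint count_below (a : nat -> R) (t : R) (j n : nat) : nat :=
  match n with
  | O => O
  | S m => (count_below a t j m + (if Rlt_dec (a (j + m)%nat) t then 1 else 0))%nat
  end.

Definition canonical (a : nat -> R) : Prop :=
  (forall i j : nat, i <> j -> a i <> a j) /\
  (forall i : nat, 0 <= a i <= 1) /\
  (forall t : R, 0 <= t <= 1 ->
     forall eps : R, eps > 0 -> exists N : nat, forall n j : nat, (N <= n)%nat ->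
        Rabs (INR (count_below a t j n) / INR n - t) < eps).

Definition alpha_ergodic (u : word) : Prop :=
  exists a : nat -> R, canonical a /\ represents_alpha a u.

(** Thue-Morse morphism 0 -> 01, 1 -> 10, and its fixed point starting with 0:
    u[0] = 0, and for n > 0, u[n] is letter (n mod 2) of the image of u[n/2]. *)
Definition tm_morph (x : nat) : list nat := [x; (1 - x)%nat].

Fixpoint tm_aux (fuel n : nat) : nat :=
  match fuel with
  | O => O
  | S f => match n with
           | O => O
           | _ => nth (n mod 2) (tm_morph (tm_aux f (Nat.div2 n))) O
           end
  end.

Definition u_tm : word := fun n => tm_aux n n.

Definition phi_tm (x : R) : list R :=
  if Rle_dec x (1/2) then [x/2 + 1/4; x/2 + 3/4] else [x/2 + 1/4; x/2 - 1/4].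

(** Its fixed point starting with 1/2: a[0] = 1/2, and for n > 0, a[n] is
    entry (n mod 2) of phi_tm (a[n/2]). *)
Fixpoint atm_aux (fuel n : nat) : R :=
  match fuel with
  | O => 1/2
  | S f => match n with
           | O => 1/2
           | _ => nth (n mod 2) (phi_tm (atm_aux f (Nat.div2 n))) 0
           end
  end.

Definition a_tm : nat -> R := fun n => atm_aux n n.

(* The recurrences a_tm (2n) = a_tm n / 2 + 1/4 and a_tm (2n+1) = a_tm n / 2 + 3/4 or a_tm n / 2 - 1/4,
   according as a_tm n <= 1/2 or not, mirror u_tm (2n) = u_tm n and u_tm (2n+1) = 1 - u_tm n, the letter
   u_tm n being 0 exactly when a_tm n <= 1/2.  Comparing two shifts of u_tm according to the parities of
   their starting points, induction on i + j shows that a_tm is increasing along the lexicographic order of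
   shifts; as u_tm is not eventually periodic, distinct shifts are comparable, so a_tm represents alpha_u_tm.
   For uniform distribution, the same recurrences show by induction on L that every aligned block of
   2^(L+1) terms has exactly one term in each interval ((i-1)/2^(L+1), i/2^(L+1)].  Hence every such block
   has discrepancy at most 2, and cutting an arbitrary window into aligned blocks gives frequencies
   uniformly. *)

From Stdlib Require Import Reals Lra Lia List ZArith Wf_nat Classical.
Open Scope R_scope.

Lemma nat_binary_ind (P : nat -> Prop) :
  P 0%nat -> (forall m, (0 < m)%nat -> P m -> P (2 * m)%nat) ->
  (forall m, P m -> P (2 * m + 1)%nat) -> forall n, P n.
Proof.
  intros P0 Peven Podd n; induction n as [n IH] using lt_wf_ind.
  destruct (Nat.Even_or_Odd n) as [[m ->]|[m ->]].
  - destruct m as [|m]; [exact P0|]. apply Peven, IH; lia.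
  - apply Podd, IH; lia.
Qed.

Lemma tm_aux_fuel f1 f2 n :
  (n <= f1)%nat -> (n <= f2)%nat -> tm_aux f1 n = tm_aux f2 n.
Proof.
  revert f2 n; induction f1 as [|f1 IH]; intros [|f2] [|n] H1 H2; try lia; try reflexivity.
  cbn -[Nat.div2 Nat.modulo]. pose proof (Nat.le_div2 n). rewrite (IH f2); [reflexivity|lia|lia].
Qed.

Lemma atm_aux_fuel f1 f2 n :
  (n <= f1)%nat -> (n <= f2)%nat -> atm_aux f1 n = atm_aux f2 n.
Proof.
  revert f2 n; induction f1 as [|f1 IH]; intros [|f2] [|n] H1 H2; try lia; try reflexivity.
  cbn -[Nat.div2 Nat.modulo]. pose proof (Nat.le_div2 n). rewrite (IH f2); [reflexivity|lia|lia].
Qed.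

Lemma u_tm_unfold n : (0 < n)%nat ->
  u_tm n = nth (n mod 2) (tm_morph (u_tm (Nat.div2 n))) 0%nat.
Proof.
  destruct n as [|n]; [lia|]; intros _. unfold u_tm at 1; cbn -[Nat.div2 Nat.modulo tm_morph].
  pose proof (Nat.le_div2 n). unfold u_tm. rewrite (tm_aux_fuel n (Nat.div2 (S n))); [reflexivity|lia|lia].
Qed.

Lemma a_tm_unfold n : (0 < n)%nat ->
  a_tm n = nth (n mod 2) (phi_tm (a_tm (Nat.div2 n))) 0.
Proof.
  destruct n as [|n]; [lia|]; intros _. unfold a_tm at 1; cbn -[Nat.div2 Nat.modulo phi_tm].
  pose proof (Nat.le_div2 n). unfold a_tm. rewrite (atm_aux_fuel n (Nat.div2 (S n))); [reflexivity|lia|lia].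
Qed.

Lemma mod2_double m : ((2 * m) mod 2 = 0)%nat.
Proof. rewrite Nat.mul_comm; apply Nat.Div0.mod_mul. Qed.

Lemma mod2_double_succ m : ((2 * m + 1) mod 2 = 1)%nat.
Proof. rewrite Nat.add_comm, Nat.mul_comm, Nat.Div0.mod_add; reflexivity. Qed.

Lemma div2_double_succ m : Nat.div2 (2 * m + 1) = m.
Proof. rewrite Nat.add_1_r; apply Nat.div2_succ_double. Qed.

Lemma u_tm_double m : u_tm (2 * m)%nat = u_tm m.
Proof.
  destruct m as [|m]; [reflexivity|].
  rewrite u_tm_unfold, mod2_double, Nat.div2_double by lia; reflexivity.
Qed.

Lemma u_tm_double_succ m : u_tm (2 * m + 1)%nat = (1 - u_tm m)%nat.
Proof. rewrite u_tm_unfold, mod2_double_succ, div2_double_succ by lia; reflexivity. Qed.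

Lemma a_tm_double m : a_tm (2 * m)%nat = a_tm m / 2 + 1/4.
Proof.
  destruct m as [|m]; [unfold a_tm; simpl; lra|].
  rewrite a_tm_unfold, mod2_double, Nat.div2_double by lia.
  unfold phi_tm; destruct Rle_dec; reflexivity.
Qed.

Lemma a_tm_double_succ m : a_tm (2 * m + 1)%nat =
  if Rle_dec (a_tm m) (1/2) then a_tm m / 2 + 3/4 else a_tm m / 2 - 1/4.
Proof.
  rewrite a_tm_unfold, mod2_double_succ, div2_double_succ by lia.
  unfold phi_tm; destruct Rle_dec; reflexivity.
Qed.

Lemma u_tm_binary n : (u_tm n <= 1)%nat.
Proof.
  induction n using nat_binary_ind; [cbn; lia| |].
  - rewrite u_tm_double; assumption.
  - rewrite u_tm_double_succ; lia.
Qed.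

Lemma a_tm_range n : 0 < a_tm n <= 1.
Proof.
  induction n using nat_binary_ind.
  - unfold a_tm; simpl; lra.
  - rewrite a_tm_double; lra.
  - rewrite a_tm_double_succ; destruct Rle_dec; lra.
Qed.

Lemma u_tm_eq0_iff n : u_tm n = 0%nat <-> a_tm n <= 1/2.
Proof.
  induction n as [|m _ IH|m IH] using nat_binary_ind.
  - unfold u_tm, a_tm; simpl; split; [lra|reflexivity].
  - rewrite u_tm_double, a_tm_double, IH; pose proof (a_tm_range m); lra.
  - rewrite u_tm_double_succ, a_tm_double_succ.
    pose proof (a_tm_range m); pose proof (u_tm_binary m).
    destruct Rle_dec as [r|r]; split; intro Hx; try lra.
    + apply IH in r; lia.
    + assert (u_tm m <> 0%nat) by (rewrite IH; exact r); lia.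
Qed.

Lemma lex_lt_irrefl w : ~ lex_lt w w.
Proof. intros [k [_ Hk]]; lia. Qed.

Lemma lex_lt_total v w : (exists k, v k <> w k) -> lex_lt v w \/ lex_lt w v.
Proof.
  intros Hdiff.
  destruct (dec_inh_nat_subset_has_unique_least_element (fun k => v k <> w k))
    as [k [[Hk Hmin] _]]; [|exact Hdiff|].
  { intros n; destruct (Nat.eq_dec (v n) (w n)); tauto. }
  assert (Hpre : forall m, (m < k)%nat -> v m = w m).
  { intros m Hm; destruct (Nat.eq_dec (v m) (w m)) as [e|e]; [exact e|].
    specialize (Hmin m e); lia. }
  destruct (Nat.lt_gt_cases (v k) (w k)) as [[c|c] _]; [exact Hk| |].
  - left; exists k; auto.
  - right; exists k; split; [intros m Hm; symmetry; auto|exact c].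
Qed.

Lemma lex_lt_cons w i j : w i = w j ->
  lex_lt (shift (S i) w) (shift (S j) w) -> lex_lt (shift i w) (shift j w).
Proof.
  intros E [k [Hk Hlt]]; unfold shift in *; exists (S k); split.
  - intros [|m] Hm; [rewrite !Nat.add_0_r; exact E|].
    rewrite <- !plus_n_Sm; apply Hk; lia.
  - rewrite <- !plus_n_Sm; exact Hlt.
Qed.

Lemma represents_alpha_of_lex_mono (a : nat -> R) (u : word) :
  (forall i j, i <> j -> exists k, u (i + k)%nat <> u (j + k)%nat) ->
  (forall i j, lex_lt (shift i u) (shift j u) -> a i < a j) ->
  represents_alpha a u.
Proof.
  intros Hdiff Hmono.
  assert (Hcmp : forall i j, i <> j ->
    lex_lt (shift i u) (shift j u) \/ lex_lt (shift j u) (shift i u))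
    by (intros i j Hij; apply lex_lt_total, Hdiff, Hij).
  split.
  - intros i j Hij E; destruct (Hcmp i j Hij) as [L|L]; apply Hmono in L; lra.
  - intros i j; split; [|apply Hmono].
    intros Hlt; destruct (Nat.eq_dec i j) as [->|Hij]; [lra|].
    destruct (Hcmp i j Hij) as [L|L]; [exact L|apply Hmono in L; lra].
Qed.

Lemma u_tm_pair n : u_tm (2 * n + 1)%nat = (1 - u_tm (2 * n))%nat.
Proof. rewrite u_tm_double_succ, u_tm_double; reflexivity. Qed.

(* Since u_tm (2m) and u_tm (2m+1) are complementary, agreeing with an even-started factor makes the
   odd-started factor repeat its first letter every two steps. *)
Lemma u_tm_mismatch_even_odd k i j :
  (forall m, (m < k)%nat -> u_tm (2 * i + m)%nat = u_tm (2 * j + 1 + m)%nat) ->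
  u_tm (2 * i + k)%nat <> u_tm (2 * j + 1 + k)%nat ->
  u_tm (2 * j + 1 + k)%nat = u_tm (2 * j + 1)%nat.
Proof.
  revert i j; induction k as [k IH] using lt_wf_ind; intros i j Hpre Hk.
  destruct k as [|[|k]]; [rewrite Nat.add_0_r; reflexivity| |].
  - pose proof (Hpre 0%nat ltac:(lia)) as H0; rewrite !Nat.add_0_r in H0.
    pose proof (u_tm_pair i); pose proof (u_tm_binary (2 * i)).
    pose proof (u_tm_binary (2 * j + 1 + 1)); lia.
  - pose proof (Hpre 0%nat ltac:(lia)) as H0; rewrite !Nat.add_0_r in H0.
    pose proof (Hpre 1%nat ltac:(lia)) as H1.
    assert (Hperiod : u_tm (2 * (j + 1) + 1)%nat = u_tm (2 * j + 1)%nat).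
    { rewrite u_tm_pair; replace (2 * (j + 1))%nat with (2 * j + 1 + 1)%nat by lia.
      pose proof (u_tm_pair i); pose proof (u_tm_binary (2 * i)); lia. }
    replace (2 * j + 1 + S (S k))%nat with (2 * (j + 1) + 1 + k)%nat by lia.
    rewrite (IH k ltac:(lia) (i + 1)%nat (j + 1)%nat); [exact Hperiod| |].
    + intros m Hm.
      replace (2 * (i + 1) + m)%nat with (2 * i + (m + 2))%nat by lia.
      replace (2 * (j + 1) + 1 + m)%nat with (2 * j + 1 + (m + 2))%nat by lia.
      apply Hpre; lia.
    + replace (2 * (i + 1) + k)%nat with (2 * i + S (S k))%nat by lia.
      replace (2 * (j + 1) + 1 + k)%nat with (2 * j + 1 + S (S k))%nat by lia.
      exact Hk.
Qed.

Lemma lex_tm_even_even i j :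
  lex_lt (shift (2 * i) u_tm) (shift (2 * j) u_tm) -> lex_lt (shift i u_tm) (shift j u_tm).
Proof.
  intros [k [Hk Hlt]]; unfold shift in *.
  destruct (Nat.Even_or_Odd k) as [[k' ->]|[k' ->]].
  - exists k'; split.
    + intros m Hm; specialize (Hk (2 * m)%nat ltac:(lia)).
      rewrite <- !Nat.mul_add_distr_l, !u_tm_double in Hk; exact Hk.
    + rewrite <- !Nat.mul_add_distr_l, !u_tm_double in Hlt; exact Hlt.
  - exfalso; specialize (Hk (2 * k')%nat ltac:(lia)).
    rewrite <- !Nat.mul_add_distr_l, !u_tm_double in Hk.
    rewrite !Nat.add_assoc, <- !Nat.mul_add_distr_l, !u_tm_double_succ in Hlt; lia.
Qed.

Lemma lex_tm_odd_odd i j :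
  lex_lt (shift (2 * i + 1) u_tm) (shift (2 * j + 1) u_tm) ->
  (u_tm i = 1%nat /\ u_tm j = 0%nat) \/ (u_tm i = u_tm j /\ lex_lt (shift i u_tm) (shift j u_tm)).
Proof.
  intros [[|k] [Hk Hlt]]; unfold shift in *;
    pose proof (u_tm_binary i); pose proof (u_tm_binary j).
  - left; rewrite !Nat.add_0_r, !u_tm_double_succ in Hlt; lia.
  - assert (E : u_tm i = u_tm j).
    { specialize (Hk 0%nat ltac:(lia)); rewrite !Nat.add_0_r, !u_tm_double_succ in Hk; lia. }
    right; split; [exact E|]. apply lex_lt_cons; [exact E|].
    rewrite <- (Nat.add_1_r i), <- (Nat.add_1_r j); apply lex_tm_even_even; exists k; unfold shift; split.
    + intros m Hm; specialize (Hk (S m) ltac:(lia)).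
      replace (2 * (i + 1) + m)%nat with (2 * i + 1 + S m)%nat by lia.
      replace (2 * (j + 1) + m)%nat with (2 * j + 1 + S m)%nat by lia; exact Hk.
    + replace (2 * (i + 1) + k)%nat with (2 * i + 1 + S k)%nat by lia.
      replace (2 * (j + 1) + k)%nat with (2 * j + 1 + S k)%nat by lia; exact Hlt.
Qed.

Lemma lex_tm_even_odd i j :
  lex_lt (shift (2 * i) u_tm) (shift (2 * j + 1) u_tm) -> u_tm (2 * j + 1)%nat = 1%nat.
Proof.
  intros [k [Hk Hlt]]; unfold shift in *.
  rewrite <- (u_tm_mismatch_even_odd k i j Hk) by lia.
  pose proof (u_tm_binary (2 * j + 1 + k)); lia.
Qed.

Lemma lex_tm_odd_even i j :
  lex_lt (shift (2 * i + 1) u_tm) (shift (2 * j) u_tm) -> u_tm (2 * i + 1)%nat = 0%nat.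
Proof.
  intros [k [Hk Hlt]]; unfold shift in *.
  rewrite <- (u_tm_mismatch_even_odd k j i); [pose proof (u_tm_binary (2 * j + k)); lia| |lia].
  intros m Hm; symmetry; apply Hk, Hm.
Qed.

Lemma a_tm_lex_mono i j :
  lex_lt (shift i u_tm) (shift j u_tm) -> a_tm i < a_tm j.
Proof.
  remember (i + j)%nat as s eqn:Hs; revert i j Hs.
  induction s as [s IH] using lt_wf_ind; intros i j -> Hl.
  destruct (Nat.Even_or_Odd i) as [[i' ->]|[i' ->]];
    destruct (Nat.Even_or_Odd j) as [[j' ->]|[j' ->]];
    pose proof (a_tm_range i'); pose proof (a_tm_range j').
  - apply lex_tm_even_even in Hl; rewrite !a_tm_double.
    destruct (Nat.eq_dec (i' + j') 0) as [Hzero|Hpos].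
    + replace i' with 0%nat in Hl by lia; replace j' with 0%nat in Hl by lia.
      destruct (lex_lt_irrefl _ Hl).
    + specialize (IH (i' + j')%nat ltac:(lia) i' j' eq_refl Hl); lra.
  - apply lex_tm_even_odd in Hl; rewrite u_tm_double_succ in Hl.
    assert (a_tm j' <= 1/2) by (apply u_tm_eq0_iff; pose proof (u_tm_binary j'); lia).
    rewrite a_tm_double, a_tm_double_succ; destruct Rle_dec; lra.
  - apply lex_tm_odd_even in Hl; rewrite u_tm_double_succ in Hl.
    assert (~ a_tm i' <= 1/2) by (rewrite <- u_tm_eq0_iff; pose proof (u_tm_binary i'); lia).
    rewrite a_tm_double, a_tm_double_succ; destruct Rle_dec; lra.
  - rewrite !a_tm_double_succ.
    destruct (lex_tm_odd_odd i' j' Hl) as [[Hi Hj]|[E Hl']].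
    + apply u_tm_eq0_iff in Hj.
      assert (~ a_tm i' <= 1/2) by (rewrite <- u_tm_eq0_iff; lia).
      do 2 destruct Rle_dec; lra.
    + specialize (IH (i' + j')%nat ltac:(lia) i' j' eq_refl Hl').
      pose proof (u_tm_eq0_iff i'); pose proof (u_tm_eq0_iff j').
      do 2 destruct Rle_dec; try lra; exfalso; rewrite E in *; tauto.
Qed.

Lemma u_tm_not_eventually_periodic p i : (0 < p)%nat ->
  ~ (forall n, (i <= n)%nat -> u_tm (n + p)%nat = u_tm n).
Proof.
  revert i; induction p as [p IH] using lt_wf_ind; intros i Hp Hper.
  destruct (Nat.Even_or_Odd p) as [[q ->]|[q ->]].
  - apply (IH q ltac:(lia) i ltac:(lia)); intros n Hn.
    rewrite <- (u_tm_double (n + q)), <- (u_tm_double n), Nat.mul_add_distr_l.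
    apply Hper; lia.
  - assert (Halt : forall n, (i <= n)%nat -> u_tm (S n) = (1 - u_tm n)%nat).
    { intros n Hn; destruct (Nat.Even_or_Odd n) as [[y ->]|[y ->]].
      - rewrite <- Nat.add_1_r; apply u_tm_pair.
      - rewrite <- (Hper _ Hn), <- (Hper (S (2 * y + 1)) ltac:(lia)).
        replace (S (2 * y + 1) + (2 * q + 1))%nat with (2 * (y + q + 1) + 1)%nat by lia.
        replace (2 * y + 1 + (2 * q + 1))%nat with (2 * (y + q + 1))%nat by lia.
        apply u_tm_pair. }
    pose proof (Halt i ltac:(lia)) as A0.
    pose proof (Halt (2 * i + 1)%nat ltac:(lia)) as A1.
    replace (S (2 * i + 1)) with (2 * S i)%nat in A1 by lia.
    rewrite u_tm_double, u_tm_double_succ in A1.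
    pose proof (u_tm_binary i); lia.
Qed.

Lemma u_tm_shifts_differ i j : i <> j -> exists k, u_tm (i + k)%nat <> u_tm (j + k)%nat.
Proof.
  enough (Hlt : forall i j, (i < j)%nat -> exists k, u_tm (i + k)%nat <> u_tm (j + k)%nat).
  { intros Hij; destruct (Nat.lt_gt_cases i j) as [[c|c] _]; [exact Hij|auto|].
    destruct (Hlt j i c) as [k Hk]; exists k; auto. }
  clear i j; intros i j Hij; apply NNPP; intros Hsame.
  apply (u_tm_not_eventually_periodic (j - i) i ltac:(lia)); intros n Hn.
  apply NNPP; intros Hne; apply Hsame; exists (n - i)%nat.
  replace (i + (n - i))%nat with n by lia; replace (j + (n - i))%nat with (n + (j - i))%nat by lia.
  auto.
Qed.

Theorem a_tm_represents : represents_alpha a_tm u_tm.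
Proof. exact (represents_alpha_of_lex_mono a_tm u_tm u_tm_shifts_differ a_tm_lex_mono). Qed.

Lemma Rabs_le_between x b : Rabs x <= b <-> - b <= x <= b.
Proof. unfold Rabs; destruct Rcase_abs; split; intros; lra. Qed.

Fixpoint window_sum (g : nat -> nat) (j n : nat) : nat :=
  match n with
  | O => O
  | S m => (window_sum g j m + g (j + m))%nat
  end.

Lemma window_sum_ext g h j n :
  (forall k, (k < n)%nat -> g (j + k)%nat = h (j + k)%nat) -> window_sum g j n = window_sum h j n.
Proof.
  induction n as [|n IH]; intros E; cbn; [reflexivity|].
  rewrite IH, E; [reflexivity|lia|intros k Hk; apply E; lia].
Qed.

Lemma window_sum_le g h j n :
  (forall k, (k < n)%nat -> (g (j + k) <= h (j + k))%nat) ->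
  (window_sum g j n <= window_sum h j n)%nat.
Proof.
  induction n as [|n IH]; intros E; cbn; [lia|].
  pose proof (E n ltac:(lia)); pose proof (IH ltac:(intros k Hk; apply E; lia)); lia.
Qed.

Lemma window_sum_add g h j n :
  window_sum (fun i => g i + h i)%nat j n = (window_sum g j n + window_sum h j n)%nat.
Proof. induction n as [|n IH]; cbn; [reflexivity|]; rewrite IH; lia. Qed.

Lemma window_sum_app g j n1 n2 :
  window_sum g j (n1 + n2) = (window_sum g j n1 + window_sum g (j + n1) n2)%nat.
Proof.
  induction n2 as [|n2 IH]; [rewrite Nat.add_0_r; cbn; lia|].
  rewrite <- plus_n_Sm; cbn; rewrite IH, Nat.add_assoc; lia.
Qed.

Lemma window_sum_pairs g j n :
  window_sum g (2 * j) (2 * n) = window_sum (fun i => g (2 * i) + g (2 * i + 1))%nat j n.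
Proof.
  induction n as [|n IH]; [reflexivity|].
  replace (2 * S n)%nat with (S (S (2 * n))) by lia; cbn [window_sum]; rewrite <- IH.
  replace (2 * j + S (2 * n))%nat with (2 * (j + n) + 1)%nat by lia.
  replace (2 * j + 2 * n)%nat with (2 * (j + n))%nat by lia; lia.
Qed.

Lemma window_sum_const c j n : window_sum (fun _ => c) j n = (c * n)%nat.
Proof. induction n as [|n IH]; cbn; [lia|]; rewrite IH; lia. Qed.

Section Discrepancy.

Variables (g : nat -> nat) (t : R).
Hypothesis g_binary : forall i, (g i <= 1)%nat.
Hypothesis t_unit : 0 <= t <= 1.

Let discrepancy j n := INR (window_sum g j n) - t * INR n.

Lemma discrepancy_le_length j n : Rabs (discrepancy j n) <= INR n.
Proof.
  assert (Hle : (window_sum g j n <= n)%nat).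
  { induction n as [|n IH]; cbn; [lia|]; specialize (g_binary (j + n)); lia. }
  apply le_INR in Hle; pose proof (pos_INR (window_sum g j n)); pose proof (pos_INR n).
  apply Rabs_le_between; unfold discrepancy; split; nra.
Qed.

Variables (B : nat) (d : R).
Hypothesis block_discrepancy : forall m, Rabs (discrepancy (B * m) B) <= d.

Lemma aligned_blocks_discrepancy m q : Rabs (discrepancy (B * m) (q * B)) <= d * INR q.
Proof.
  induction q as [|q IH]; unfold discrepancy in *.
  - cbn; rewrite Rmult_0_r, Rminus_0_r, Rabs_R0; lra.
  - replace (S q * B)%nat with (q * B + B)%nat by lia.
    rewrite window_sum_app; replace (B * m + q * B)%nat with (B * (m + q))%nat by lia.
    pose proof (block_discrepancy (m + q)) as Hb; unfold discrepancy in Hb.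
    rewrite !plus_INR, S_INR.
    apply Rabs_le_between in IH, Hb; apply Rabs_le_between; lra.
Qed.

Lemma window_discrepancy j n : (0 < B)%nat ->
  Rabs (discrepancy j n) <= 2 * INR B + d * INR n / INR B.
Proof.
  intros HB; pose proof (lt_0_INR _ HB) as HBr.
  assert (Hd : 0 <= d)
    by (pose proof (block_discrepancy 0); pose proof (Rabs_pos (discrepancy (B * 0) B)); lra).
  assert (Hn : 0 <= d * INR n / INR B)
    by (apply Rmult_le_pos; [apply Rmult_le_pos; [lra|apply pos_INR]|left; apply Rinv_0_lt_compat; lra]).
  (* [j, j + n) = head up to the next multiple of B, then q aligned blocks, then a tail shorter than B *)
  set (m := (j / B + 1)%nat); set (p := (B * m - j)%nat).
  assert (Hp : (0 < p <= B)%nat).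
  { unfold p, m; pose proof (Nat.div_mod_eq j B); pose proof (Nat.mod_upper_bound j B ltac:(lia)); nia. }
  assert (HpB : INR p <= INR B) by (apply le_INR; lia).
  destruct (Nat.le_gt_cases n p) as [Hnp|Hnp].
  { pose proof (discrepancy_le_length j n); pose proof (le_INR _ _ Hnp); lra. }
  set (q := ((n - p) / B)%nat); set (s := ((n - p) mod B)%nat).
  assert (En : n = (p + (q * B + s))%nat)
    by (unfold q, s; pose proof (Nat.div_mod_eq (n - p) B); lia).
  assert (Hs : INR s <= INR B) by (apply le_INR, Nat.lt_le_incl, Nat.mod_upper_bound; lia).
  assert (Hq : d * INR q <= d * INR n / INR B).
  { assert (INR q * INR B <= INR n) by (rewrite <- mult_INR; apply le_INR; lia).
    apply (Rmult_le_reg_r (INR B)); [lra|].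
    replace (d * INR n / INR B * INR B) with (d * INR n) by (field; lra). nra. }
  assert (Hsplit : discrepancy j n =
    discrepancy j p + discrepancy (B * m) (q * B) + discrepancy (B * m + q * B) s).
  { unfold discrepancy; rewrite En at 1 2; rewrite !window_sum_app, !plus_INR.
    replace (j + p)%nat with (B * m)%nat by (unfold p; lia); ring. }
  pose proof (discrepancy_le_length j p) as E1.
  pose proof (aligned_blocks_discrepancy m q) as E2.
  pose proof (discrepancy_le_length (B * m + q * B) s) as E3.
  rewrite Hsplit; apply Rabs_le_between in E1, E2, E3; apply Rabs_le_between; lra.
Qed.

End Discrepancy.

Lemma count_below_window_sum a t j n :
  count_below a t j n = window_sum (fun i => if Rlt_dec (a i) t then 1%nat else 0%nat) j n.
Proof. induction n as [|n IH]; cbn; [reflexivity|]; rewrite IH; reflexivity. Qed.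

Lemma canonical_of_block_discrepancy (a : nat -> R) (d : R) :
  (forall i j, i <> j -> a i <> a j) -> (forall i, 0 <= a i <= 1) ->
  (forall t, 0 <= t <= 1 -> forall M : nat, exists B : nat, (M < B)%nat /\
     forall m, Rabs (INR (count_below a t (B * m) B) - t * INR B) <= d) ->
  canonical a.
Proof.
  intros Hdist Hrange Hblocks; split; [exact Hdist|split; [exact Hrange|]].
  intros t Ht eps Heps.
  destruct (INR_unbounded (2 * d / eps)) as [M HM].
  destruct (Hblocks t Ht M) as [B [HMB Hb]].
  setoid_rewrite count_below_window_sum in Hb; setoid_rewrite count_below_window_sum.
  set (g := fun i => if Rlt_dec (a i) t then 1%nat else 0%nat) in *.
  assert (Hg : forall i, (g i <= 1)%nat) by (intros i; unfold g; destruct Rlt_dec; lia).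
  assert (HB : 0 < INR B) by (apply lt_0_INR; lia).
  assert (HdB : 2 * (d / INR B) < eps).
  { pose proof (lt_INR _ _ HMB).
    assert (2 * d < eps * INR B).
    { replace (2 * d) with (eps * (2 * d / eps)) by (field; lra).
      apply Rmult_lt_compat_l; lra. }
    apply (Rmult_lt_reg_r (INR B)); [lra|].
    replace (2 * (d / INR B) * INR B) with (2 * d) by (field; lra); lra. }
  destruct (INR_unbounded (4 * INR B / eps)) as [N HN].
  exists N; intros n j Hn.
  pose proof (le_INR _ _ Hn) as HnN.
  assert (H4B : 4 * INR B < eps * INR n).
  { replace (4 * INR B) with (eps * (4 * INR B / eps)) by (field; lra).
    apply Rmult_lt_compat_l; lra. }
  assert (Hn0 : 0 < INR n) by nra.
  pose proof (window_discrepancy g t Hg Ht B d Hb j n ltac:(apply INR_lt; simpl; lra)) as W.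
  replace (INR (window_sum g j n) / INR n - t)
    with ((INR (window_sum g j n) - t * INR n) / INR n) by (field; lra).
  unfold Rdiv at 1; rewrite Rabs_mult, Rabs_inv, (Rabs_pos_eq (INR n)) by lra.
  apply (Rmult_lt_reg_r (INR n)); [lra|]; rewrite Rmult_assoc, Rinv_l, Rmult_1_r by lra.
  replace (d * INR n / INR B) with (d / INR B * INR n) in W by (field; lra).
  nra.
Qed.

Definition a_tm_le (c : R) (i : nat) : nat := if Rle_dec (a_tm i) c then 1%nat else 0%nat.

Definition block_count (L m : nat) (c : R) : nat := window_sum (a_tm_le c) (2 ^ L * m) (2 ^ L).

Lemma block_count_nonpos L m c : c <= 0 -> block_count L m c = 0%nat.
Proof.
  intros Hc; unfold block_count; rewrite (window_sum_ext _ (fun _ => 0%nat)).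
  - rewrite window_sum_const; lia.
  - intros k _; unfold a_tm_le; pose proof (a_tm_range (2 ^ L * m + k)).
    destruct Rle_dec; [lra|reflexivity].
Qed.

Lemma block_count_ge1 L m c : 1 <= c -> block_count L m c = (2 ^ L)%nat.
Proof.
  intros Hc; unfold block_count; rewrite (window_sum_ext _ (fun _ => 1%nat)).
  - rewrite window_sum_const; lia.
  - intros k _; unfold a_tm_le; pose proof (a_tm_range (2 ^ L * m + k)).
    destruct Rle_dec; [reflexivity|lra].
Qed.

Lemma a_tm_le_double c n : a_tm_le c (2 * n) = a_tm_le (2 * c - 1/2) n.
Proof. unfold a_tm_le; rewrite a_tm_double; do 2 destruct Rle_dec; try reflexivity; lra. Qed.

(* [a_tm (2n+1) <= c] iff [a_tm n <= 2c - 3/2], or [1/2 < a_tm n <= 2c + 1/2]. *)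
Lemma a_tm_le_double_succ c n : 0 <= c <= 1 ->
  (a_tm_le c (2 * n + 1) + a_tm_le (1/2) n = a_tm_le (2 * c - 3/2) n + a_tm_le (2 * c + 1/2) n)%nat.
Proof.
  intros Hc; unfold a_tm_le; rewrite a_tm_double_succ; pose proof (a_tm_range n).
  repeat destruct Rle_dec; try reflexivity; lra.
Qed.

Lemma block_count_succ L m c : 0 <= c <= 1 ->
  (block_count (S L) m c + block_count L m (1/2) =
   block_count L m (2 * c - 1/2) + block_count L m (2 * c - 3/2) + block_count L m (2 * c + 1/2))%nat.
Proof.
  intros Hc; unfold block_count; rewrite Nat.pow_succ_r', <- Nat.mul_assoc, window_sum_pairs.
  rewrite <- !window_sum_add; apply window_sum_ext; intros k _.
  rewrite a_tm_le_double; pose proof (a_tm_le_double_succ c (2 ^ L * m + k) Hc); lia.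
Qed.

Lemma block_count_one_exact m z :
  INR (block_count 1 m (IZR z / 2)) = Rmax 0 (Rmin (IZR z) 2).
Proof.
  destruct (Z_lt_le_dec 0 z) as [Hz|Hz]; [destruct (Z_lt_le_dec 1 z) as [Hz1|Hz1]|].
  - assert (H2 : (2 <= z)%Z) by lia; apply IZR_le in H2; rewrite block_count_ge1 by lra.
    unfold Rmax, Rmin; repeat destruct Rle_dec; simpl; lra.
  - replace z with 1%Z by lia; unfold block_count, a_tm_le.
    replace (2 ^ 1 * m)%nat with (2 * m)%nat by (cbn; lia); change (2 ^ 1)%nat with 2%nat.
    cbn [window_sum]; rewrite Nat.add_0_r, a_tm_double, a_tm_double_succ; pose proof (a_tm_range m).
    unfold Rmax, Rmin; repeat destruct Rle_dec; simpl; lra.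
  - apply IZR_le in Hz; rewrite block_count_nonpos by lra.
    unfold Rmax, Rmin; repeat destruct Rle_dec; simpl; lra.
Qed.

Lemma block_count_exact L m z :
  INR (block_count (S L) m (IZR z / INR (2 ^ S L))) = Rmax 0 (Rmin (IZR z) (INR (2 ^ S L))).
Proof.
  revert m z; induction L as [|L IH]; intros m z; [exact (block_count_one_exact m z)|].
  set (k := Z.of_nat (2 ^ L)).
  assert (Hk : 0 < IZR k).
  { unfold k; rewrite <- INR_IZR_INZ; apply lt_0_INR, Nat.neq_0_lt_0, Nat.pow_nonzero; lia. }
  assert (HD : INR (2 ^ S L) = 2 * IZR k)
    by (unfold k; rewrite <- INR_IZR_INZ, Nat.pow_succ_r', mult_INR; reflexivity).
  assert (H2D : INR (2 ^ S (S L)) = 4 * IZR k)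
    by (rewrite Nat.pow_succ_r', mult_INR, HD; simpl; ring).
  rewrite H2D; set (c := IZR z / (4 * IZR k)).
  assert (Hz : IZR z = 4 * IZR k * c) by (unfold c; field; lra).
  destruct (Rle_dec c 0) as [Hc0|Hc0].
  { rewrite block_count_nonpos by exact Hc0; unfold Rmax, Rmin; repeat destruct Rle_dec; simpl; nra. }
  destruct (Rle_dec 1 c) as [Hc1|Hc1].
  { rewrite block_count_ge1, H2D by exact Hc1; unfold Rmax, Rmin; repeat destruct Rle_dec; nra. }
  pose proof (block_count_succ (S L) m c ltac:(lra)) as Hstep; apply (f_equal INR) in Hstep.
  rewrite !plus_INR in Hstep.
  replace (2 * c - 1/2) with (IZR (z - k) / INR (2 ^ S L)) in Hstep
    by (rewrite minus_IZR, HD; unfold c; field; lra).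
  replace (2 * c - 3/2) with (IZR (z - 3 * k) / INR (2 ^ S L)) in Hstep
    by (rewrite minus_IZR, mult_IZR, HD; unfold c; field; lra).
  replace (2 * c + 1/2) with (IZR (z + k) / INR (2 ^ S L)) in Hstep
    by (rewrite plus_IZR, HD; unfold c; field; lra).
  replace (1/2) with (IZR k / INR (2 ^ S L)) in Hstep by (rewrite HD; field; lra).
  rewrite !IH, HD, minus_IZR, minus_IZR, mult_IZR, plus_IZR in Hstep.
  assert (0 < IZR z < 4 * IZR k) by nra.
  unfold Rmax, Rmin in *; repeat destruct Rle_dec; lra.
Qed.

Lemma a_tm_block_discrepancy t L m : 0 <= t <= 1 ->
  Rabs (INR (count_below a_tm t (2 ^ S L * m) (2 ^ S L)) - t * INR (2 ^ S L)) <= 2.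
Proof.
  intros Ht; rewrite count_below_window_sum.
  set (D := INR (2 ^ S L)); set (B := (2 ^ S L)%nat) in *.
  set (lt_t := fun i => if Rlt_dec (a_tm i) t then 1%nat else 0%nat).
  assert (HD : 0 < D) by (apply lt_0_INR, Nat.neq_0_lt_0, Nat.pow_nonzero; lia).
  set (z := (up (t * D) - 1)%Z).
  assert (Hz : t * D - 1 < IZR z <= t * D)
    by (destruct (archimed (t * D)); unfold z; rewrite minus_IZR; simpl; lra).
  assert (HtD : t * D <= D) by nra.
  assert (Hlow : (block_count (S L) m (IZR (z - 1) / D) <= window_sum lt_t (B * m) B)%nat).
  { apply window_sum_le; intros k _; unfold a_tm_le, lt_t.
    assert (IZR (z - 1) / D < t)
      by (apply (Rmult_lt_reg_r D); [lra|]; rewrite minus_IZR; field_simplify; lra).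
    destruct Rle_dec, Rlt_dec; lra || lia. }
  assert (Hup : (window_sum lt_t (B * m) B <= block_count (S L) m (IZR (z + 1) / D))%nat).
  { apply window_sum_le; intros k _; unfold a_tm_le, lt_t.
    assert (t <= IZR (z + 1) / D)
      by (apply (Rmult_le_reg_r D); [lra|]; rewrite plus_IZR; field_simplify; lra).
    destruct Rle_dec, Rlt_dec; lra || lia. }
  apply le_INR in Hlow, Hup; unfold D in Hlow, Hup; rewrite block_count_exact in Hlow, Hup.
  change (INR (2 ^ S L)) with D in Hlow, Hup; rewrite minus_IZR in Hlow; rewrite plus_IZR in Hup.
  assert (0 <= t * D) by nra; change (IZR 1) with 1 in Hlow, Hup.
  apply Rabs_le_between; unfold Rmax, Rmin in *; repeat destruct Rle_dec; lra.
Qed.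

Theorem a_tm_canonical : canonical a_tm.
Proof.
  apply (canonical_of_block_discrepancy a_tm 2).
  - apply a_tm_represents.
  - intros i; pose proof (a_tm_range i); lra.
  - intros t Ht M; exists (2 ^ S M)%nat; split.
    + pose proof (Nat.pow_gt_lin_r 2 (S M)); lia.
    + intros m; apply a_tm_block_discrepancy, Ht.
Qed.

Theorem mainTheorem4 :
  canonical a_tm /\ represents_alpha a_tm u_tm /\ alpha_ergodic u_tm.
Proof.
  split; [exact a_tm_canonical|split; [exact a_tm_represents|]].
  exists a_tm; split; [exact a_tm_canonical|exact a_tm_represents].
Qed.
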